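(* Let $\mathcal{T}$ be a microdata table with $d \ge 1$ quasi-identifier attributes and let $l$ be a positive integer. For any $\lambda \ge 1$, every $\lambda$-approximate solution to Tuple Minimization on $(\mathcal{T}, l)$ is a $(\lambda \cdot d)$-approximate solution to Star Minimization on $(\mathcal{T}, l)$.
   Context: A microdata table $\mathcal{T}$ is a multiset of $n$ tuples over $d$ categorical quasi-identifier (QI) attributes $A_1,\dots,A_d$ and one categorical sensitive attribute (SA) $B$. For an integer $l \ge 1$, a set $S$ of tuples is $l$-eligible if at most $|S|/l$ of its tuples share any identical SA value. A partition $P$ of $\mathcal{T}$ into disjoint subsets (QI-groups) defines a generalization $\mathcal{T}^*$: for each QI-group and each $i$, if all tuples of the group have the same value on $A_i$ they keep it, otherwise all their $A_i$ values are replaced by a star `*'; SA values are kept unchanged. $\mathcal{T}^*$ is $l$-diverse if every QI-group is $l$-eligible. A tuple is suppressed if at least one of its QI values is replaced by a star. Star Minimization: find an $l$-diverse generalization of $\mathcal{T}$ with the minimum number of stars. Tuple Minimization: find an $l$-diverse generalization of $\mathcal{T}$ with the minimum number of suppressed tuples. A $\lambda$-approximate solution to either problem is an $l$-diverse generalization whose objective value (number of stars, resp. number of suppressed tuples) is at most $\lambda$ times the optimal value. *)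

From mathcomp Require Import all_boot all_order all_algebra.
Set Implicit Arguments. Unset Strict Implicit. Unset Printing Implicit Defensive.

(* A microdata table with n tuples (indexed by 'I_n, so duplicates allowed),
   d QI attributes with values in QT, and one SA with values in ST:
   qi t i = value of tuple t on attribute A_i, sa t = SA value of t. *)

Definition same_on (n d : nat) (QT : eqType) (qi : 'I_n -> 'I_d -> QT)
  (G : {set 'I_n}) (i : 'I_d) : bool :=
  [forall t in G, forall u in G, qi t i == qi u i].

Definition l_eligible (n : nat) (ST : eqType) (sa : 'I_n -> ST) (l : nat)
  (G : {set 'I_n}) : bool :=
  [forall t in G, #|[set u in G | sa u == sa t]| * l <= #|G|].

Definition l_diverse (n : nat) (ST : eqType) (sa : 'I_n -> ST) (l : nat)
  (P : {set {set 'I_n}}) : bool :=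
  partition P [set: 'I_n] && [forall G in P, l_eligible sa l G].

Definition num_stars (n d : nat) (QT : eqType) (qi : 'I_n -> 'I_d -> QT)
  (P : {set {set 'I_n}}) : nat :=
  \sum_(G in P) \sum_(i < d) (if same_on qi G i then 0 else #|G|).

Definition num_suppressed (n d : nat) (QT : eqType) (qi : 'I_n -> 'I_d -> QT)
  (P : {set {set 'I_n}}) : nat :=
  \sum_(G in P) (if [forall i, same_on qi G i] then 0 else #|G|).

Local Open Scope ring_scope.

Definition approx_sol (R : realFieldType) (n : nat) (ST : eqType)
  (sa : 'I_n -> ST) (l : nat) (obj : {set {set 'I_n}} -> nat) (lam : R)
  (P : {set {set 'I_n}}) : Prop :=
  l_diverse sa l P /\
  forall Q : {set {set 'I_n}}, l_diverse sa l Q -> (obj P)%:R <= lam * (obj Q)%:R.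

From mathcomp Require Import all_boot all_order all_algebra.
Import Order.TTheory GRing.Theory Num.Theory.
Local Open Scope ring_scope.

(* A suppressed tuple carries between 1 and d stars and an unsuppressed one
   none, so [num_suppressed <= num_stars <= d * num_suppressed] for every
   partition.  Sandwiching two objectives this way transfers a
   lambda-approximation for the coarser one into a (lambda * d)-approximation
   for the finer one. *)

Lemma num_stars_le_suppressed (n d : nat) (QT : eqType)
  (qi : 'I_n -> 'I_d -> QT) (P : {set {set 'I_n}}) :
  (num_stars qi P <= d * num_suppressed qi P)%N.
Proof.
rewrite /num_stars /num_suppressed big_distrr /=; apply: leq_sum => G _.
case: ifP => [/forallP same_all | _].
  by rewrite muln0 big1 // => i _; rewrite same_all.
apply: (@leq_trans (\sum_(i < d) #|G|)).
  by apply: leq_sum => i _; case: ifP.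
by rewrite sum_nat_const card_ord.
Qed.

Lemma num_suppressed_le_stars (n d : nat) (QT : eqType)
  (qi : 'I_n -> 'I_d -> QT) (P : {set {set 'I_n}}) :
  (num_suppressed qi P <= num_stars qi P)%N.
Proof.
rewrite /num_stars /num_suppressed; apply: leq_sum => G _.
case: ifP => // /negbT /forallPn [i not_same].
by rewrite (bigD1 i) //= (negbTE not_same) leq_addr.
Qed.

Lemma approx_sol_sandwich (R : realFieldType) (n : nat) (ST : eqType)
  (sa : 'I_n -> ST) (l c : nat) (f g : {set {set 'I_n}} -> nat) (lam : R)
  (P : {set {set 'I_n}}) :
  0 <= lam ->
  (forall Q, f Q <= g Q)%N -> (forall Q, g Q <= c * f Q)%N ->
  approx_sol sa l f lam P -> approx_sol sa l g (lam * c%:R) P.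
Proof.
move=> lam_ge0 f_le_g g_le_cf [divP approxP]; split => // Q divQ.
have gP_le : (g P)%:R <= c%:R * (f P)%:R :> R by rewrite -natrM ler_nat.
apply: (le_trans gP_le); rewrite [lam * _]mulrC -mulrA.
apply: ler_wpM2l; first exact: ler0n.
apply: (le_trans (approxP Q divQ)).
by rewrite ler_wpM2l // ler_nat.
Qed.

Theorem lemma2 (R : realFieldType) (n d : nat) (QT ST : eqType)
  (qi : 'I_n -> 'I_d -> QT) (sa : 'I_n -> ST) (l : nat) (lam : R)
  (P : {set {set 'I_n}}) :
  (1 <= d)%N -> (1 <= l)%N -> 1 <= lam ->
  approx_sol sa l (num_suppressed qi) lam P ->
  approx_sol sa l (num_stars qi) (lam * d%:R) P.
Proof.
move=> _ _ lam_ge1; apply: approx_sol_sandwich.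
- exact: le_trans lam_ge1.
- exact: num_suppressed_le_stars.
- exact: num_stars_le_suppressed.
Qed.
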